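(* Let $A$ be a finite totally ordered alphabet and let $u\in A^{+}$ be a primitive word. Then the semigroups $S_{u}$ and $S(u)$ (defined in the context) are isomorphic; indeed the map $[x]\mapsto x'$ $(x\in A^{+})$ is a well-defined isomorphism $S_{u}\to S(u)$.
   Context: A word is primitive if it is not a power $r^{t}$ ($t\ge 2$) of another word. Words $w=xy$ and $yx$ are conjugates; the necklace $n(u)$ of a primitive word $u$ is its set of conjugates. For each letter $a\in A$ let $a'$ be the partial one-to-one map on $n(u)$ whose domain is the set of words of $n(u)$ beginning with $a$, given by $ax\mapsto xa$ (so $a'$ is the empty map if $a$ does not occur in $u$). For $x=b_{1}\cdots b_{m}\in A^{+}$ put $x'=b_{1}'b_{2}'\cdots b_{m}'$ (composition of partial maps, from left to right). $S(u)$ is the semigroup of partial maps on $n(u)$ generated by $\{a' : a\in A\}$ under composition. Let $\langle u\rangle=\{u^{m}:m\ge 1\}$ and let $\rho_{u}$ be the syntactic congruence of $\langle u\rangle$ on $A^{+}$: for $x,y\in A^{+}$, $x\,\rho_{u}\,y$ iff for all $p,q\in A^{*}$, $pxq\in\langle u\rangle\Leftrightarrow pyq\in\langle u\rangle$. $S_{u}=A^{+}/\rho_{u}$, and $[x]$ denotes the $\rho_u$-class of $x$. *)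

From mathcomp Require Import all_boot all_order.
Set Implicit Arguments. Unset Strict Implicit. Unset Printing Implicit Defensive.

Section Words.
Variable A : eqType.

Definition wpow (r : seq A) (t : nat) : seq A := flatten (nseq t r).

Definition primitive (u : seq A) : Prop :=
  forall (r : seq A) (t : nat), 2 <= t -> u <> wpow r t.

Definition in_powers (u w : seq A) : Prop :=
  exists m, 1 <= m /\ w = wpow u m.

Definition rho (u x y : seq A) : Prop :=
  forall p q : seq A, in_powers u (p ++ x ++ q) <-> in_powers u (p ++ y ++ q).

(* necklace n(u): the conjugates y x of u = x y (i.e. the rotations of u) *)
Definition in_necklace (u w : seq A) : bool :=
  has (fun i => rot i u == w) (iota 0 (size u)).

(* partial maps on n(u), represented as functions seq A -> option (seq A)
   that return None outside their domain (in particular outside n(u)) *)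
Definition pmap_t := seq A -> option (seq A).

(* composition from left to right: first f, then g *)
Definition pmcomp (f g : pmap_t) : pmap_t := fun w => obind g (f w).

Definition letter_map (u : seq A) (a : A) : pmap_t :=
  fun w => match w with
           | b :: x => if (b == a) && in_necklace u w then Some (rcons x a) else None
           | [::] => None
           end.

Definition word_map (u : seq A) (x : seq A) : pmap_t :=
  foldl (fun f a => pmcomp f (letter_map u a)) (fun w => if in_necklace u w then Some w else None) x.

Inductive inS (u : seq A) : pmap_t -> Prop :=
| inS_gen (a : A) : inS u (letter_map u a)
| inS_comp (f g : pmap_t) : inS u f -> inS u g -> inS u (pmcomp f g).

End Words.

From mathcomp Require Import all_boot all_order.
From mathcomp Require Import zify.
From Stdlib Require Import FunctionalExtensionality.

(* Write u^ω for the periodic extension of u ([uinf]) and [ufactor i k] for its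
   factor of length k at position i.  The necklace of u is the set of the
   conjugates ufactor i |u|, and x' maps ufactor i |u| to ufactor (i + |x|) |u|
   when x occurs in u^ω at position i, and is undefined otherwise.  Likewise
   p x q is a power of u iff p, x, q occur consecutively in u^ω from position 0
   and |u| divides |pxq|; hence x rho_u y iff x and y occur at the same
   positions of u^ω and |x| = |y| mod |u|.  The two descriptions agree because
   the conjugates of a primitive word are pairwise distinct: if
   ufactor i |u| = ufactor (i + k) |u|, then k, hence gcd(k, |u|), is a period
   of u^ω, and u would be a proper power unless |u| divides k. *)

Set Implicit Arguments.

Lemma wpowS (A : eqType) (r : seq A) t : wpow r t.+1 = r ++ wpow r t.
Proof. by []. Qed.

Section WordMaps.
Variables (A : eqType) (u : seq A).

Lemma word_map_rcons x a :
  word_map u (rcons x a) = pmcomp (word_map u x) (letter_map u a).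
Proof. by rewrite /word_map foldl_rcons. Qed.

Lemma word_map1 a : word_map u [:: a] =1 letter_map u a.
Proof.
move=> w; rewrite /word_map /= /pmcomp; case: ifP => //= w_notin.
by case: w w_notin => //= b w ->; rewrite andbF.
Qed.

Lemma word_map_notin x w : ~~ in_necklace u w -> word_map u x w = None.
Proof.
move=> w_notin; elim/last_ind: x => [|x a IHx].
  by rewrite /word_map /= (negbTE w_notin).
by rewrite word_map_rcons /pmcomp IHx.
Qed.

Lemma inS_word_map x : x != [::] -> inS u (word_map u x).
Proof.
elim/last_ind: x => [//|x a IHx] _; case: (eqVneq x [::]) => [->|x_nonempty].
  by rewrite (functional_extensionality _ _ (word_map1 a)); exact: inS_gen.
by rewrite word_map_rcons; apply: inS_comp; [exact: IHx | exact: inS_gen].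
Qed.

End WordMaps.

Section PeriodicExtension.
Context {A : eqType} (x0 : A) {u : seq A}.
Hypothesis u_nonempty : 0 < size u.
Local Notation n := (size u).

Definition uinf (j : nat) : A := nth x0 u (j %% n).

Definition ufactor (i k : nat) : seq A := mkseq (fun j => uinf (i + j)) k.

Definition period (p : nat) : Prop := forall j, uinf (j + p) = uinf j.

Lemma period_size : period n.
Proof. by move=> j; rewrite /uinf modnDr. Qed.

Lemma period_mul m p : period p -> period (m * p).
Proof.
move=> hp; elim: m => [|m IHm] j; first by rewrite addn0.
by rewrite mulSn addnA IHm hp.
Qed.

Lemma period_gcdn p q : period p -> period q -> period (gcdn p q).
Proof.
case: (posnP p) => [-> _ //|p_gt0 hp hq j]; first by rewrite gcd0n.
case: (egcdnP q p_gt0) => kp kq def_g _.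
by rewrite -(period_mul kq hq (j + _)) -addnA (addnC (gcdn p q)) -def_g period_mul.
Qed.

Lemma size_ufactor i k : size (ufactor i k) = k.
Proof. exact: size_mkseq. Qed.

Lemma ufactorD i k l : ufactor i (k + l) = ufactor i k ++ ufactor (i + k) l.
Proof.
rewrite /ufactor /mkseq iotaD map_cat; congr (_ ++ _).
by rewrite add0n -[in LHS](addn0 k) iotaDl -map_comp; apply: eq_map => j /=; rewrite addnA.
Qed.

Lemma ufactor1 i : ufactor i 1 = [:: uinf i].
Proof. by rewrite /ufactor /mkseq /= addn0. Qed.

Lemma eq_ufactor i j k : i = j %[mod n] -> ufactor i k = ufactor j k.
Proof. by move=> eij; apply: eq_mkseq => l; rewrite /uinf -modnDml eij modnDml. Qed.

Lemma ufactor0 : ufactor 0 n = u.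
Proof.
rewrite -[RHS](mkseq_nth x0) /ufactor /mkseq; apply/eq_in_map => j.
by rewrite mem_iota /uinf add0n => /andP[_ /modn_small ->].
Qed.

Lemma cat_ufactor i (s1 s2 : seq A) :
  (s1 ++ s2 == ufactor i (size (s1 ++ s2)))
    = (s1 == ufactor i (size s1)) && (s2 == ufactor (i + size s1) (size s2)).
Proof. by rewrite size_cat ufactorD eqseq_cat // size_ufactor. Qed.

Lemma wpow_ufactor p t : period p -> wpow (ufactor 0 p) t = ufactor 0 (t * p).
Proof.
move=> hp; elim: t => [|t IHt]; first by rewrite /ufactor.
rewrite wpowS mulSn ufactorD IHt; congr (_ ++ _).
by apply: eq_mkseq => j; rewrite add0n addnC hp.
Qed.

Lemma in_powersE s :
  in_powers u s <-> [/\ 0 < size s, n %| size s & s == ufactor 0 (size s)].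
Proof.
have wpow_u m : wpow u m = ufactor 0 (m * n).
  by rewrite -{1}ufactor0 wpow_ufactor //; exact: period_size.
split.
  case=> m [m_gt0 ->]; rewrite wpow_u size_ufactor.
  by rewrite muln_gt0 m_gt0 u_nonempty dvdn_mull.
case=> s_gt0 /dvdnP[m def_s] /eqP ->; exists m; split.
  by move: s_gt0; rewrite def_s muln_gt0 => /andP[].
by rewrite wpow_u def_s.
Qed.

Lemma rot_ufactor i : rot (i %% n) u = ufactor i n.
Proof.
rewrite (eq_ufactor i (i %% n) n (esym (modn_mod i n))).
have m_le : i %% n <= n by rewrite ltnW ?ltn_pmod.
move: (i %% n) m_le => m m_le.
have def_u : u = ufactor 0 m ++ ufactor m (n - m) by rewrite -ufactorD subnKC ?ufactor0.
have ufactor_n : ufactor n m = ufactor 0 m by apply: eq_ufactor; rewrite modnn mod0n.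
rewrite /rot.
have -> : drop m u = ufactor m (n - m) by rewrite {1}def_u drop_size_cat ?size_ufactor.
have -> : take m u = ufactor 0 m by rewrite {1}def_u take_size_cat ?size_ufactor.
by rewrite -[in RHS](subnK m_le) ufactorD subnKC // ufactor_n.
Qed.

Lemma in_necklaceP w : reflect (exists i, w = ufactor i n) (in_necklace u w).
Proof.
apply: (iffP hasP) => [[i]|[i ->]].
  rewrite mem_iota add0n => /andP[_ /modn_small def_i] /eqP <-.
  by exists i; rewrite -rot_ufactor def_i.
exists (i %% n); first by rewrite mem_iota add0n ltn_pmod.
by rewrite rot_ufactor.
Qed.

Lemma ufactor_in_necklace i : in_necklace u (ufactor i n).
Proof. by apply/in_necklaceP; exists i. Qed.

Lemma ufactor_cons i : ufactor i n = uinf i :: ufactor i.+1 n.-1.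
Proof. by rewrite -[in LHS](prednK u_nonempty) -add1n ufactorD ufactor1 addn1. Qed.

Lemma ufactorS i : ufactor i.+1 n = rcons (ufactor i.+1 n.-1) (uinf i).
Proof.
rewrite -[in LHS](prednK u_nonempty) /ufactor mkseqS.
by rewrite addSnnS prednK // period_size.
Qed.

Lemma ufactorS_rot i : ufactor i.+1 n = rot 1 (ufactor i n).
Proof. by rewrite [ufactor i n]ufactor_cons rot1_cons ufactorS. Qed.

Lemma letter_map_ufactor a i :
  letter_map u a (ufactor i n) = if a == uinf i then Some (ufactor i.+1 n) else None.
Proof.
rewrite {1}ufactor_cons /= -ufactor_cons ufactor_in_necklace andbT eq_sym.
by case: eqP => // ->; rewrite ufactorS.
Qed.

Lemma word_map_ufactor x i :
  word_map u x (ufactor i n)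
    = if x == ufactor i (size x) then Some (ufactor (i + size x) n) else None.
Proof.
elim/last_ind: x => [|x a IHx].
  by rewrite /word_map /= ufactor_in_necklace addn0.
rewrite word_map_rcons /pmcomp IHx -cats1 cat_ufactor; case: (x == _) => //=.
by rewrite letter_map_ufactor size_cat addn1 addnS ufactor1 eqseq_cons andbT.
Qed.

Lemma word_map_cat x y w :
  word_map u (x ++ y) w = obind (word_map u y) (word_map u x w).
Proof.
case: (boolP (in_necklace u w)) => [/in_necklaceP[i ->]|w_notin].
  rewrite !word_map_ufactor cat_ufactor size_cat addnA.
  by case: (x == _) => //=; rewrite word_map_ufactor.
by rewrite !word_map_notin.
Qed.

Lemma inS_eq_word_map f : inS u f -> exists2 x, x != [::] & f =1 word_map u x.
Proof.
elim=> [a|g h _ [x x_nonempty gx] _ [y _ hy]].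
  by exists [:: a] => // w; rewrite word_map1.
exists (x ++ y); first by case: x x_nonempty {gx}.
move=> w; rewrite word_map_cat /pmcomp gx.
by case: (word_map u x w) => //= v; exact: hy.
Qed.

Lemma ufactor_eq_period i k : ufactor i n = ufactor (i + k) n -> period k.
Proof.
move=> eq_ik.
have shift l : ufactor (i + l) n = ufactor (i + k + l) n.
  by elim: l => [|l IHl]; rewrite ?addn0 // !addnS !ufactorS_rot IHl.
have uinf_shift l : uinf (i + l) = uinf (i + k + l).
  by move: (shift l); rewrite !ufactor_cons => -[].
move=> j; have i_le : i <= j + i * n.
  by rewrite (leq_trans (leq_pmulr i u_nonempty)) ?leq_addl.
rewrite -(period_mul i period_size j) -(subnKC i_le) uinf_shift.
by rewrite -(period_mul i period_size (j + k)); congr uinf; lia.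
Qed.

Lemma rho_ufactor i x y : rho u x y -> x == ufactor i (size x) ->
  (y == ufactor i (size y)) && (i + size x == i + size y %[mod n]).
Proof.
move=> xy x_at; pose q := ufactor (i + size x) (n - (i + size x) %% n).
have lt_mod : (i + size x) %% n < n by rewrite ltn_pmod.
have dvd_x : n %| i + (size x + size q).
  by rewrite addnA /dvdn -modnDml size_ufactor subnKC ?modnn // ltnW.
have pxq : in_powers u (ufactor 0 i ++ x ++ q).
  apply/in_powersE; rewrite !cat_ufactor !size_cat size_ufactor dvd_x add0n x_at.
  by rewrite !addn_gt0 size_ufactor subn_gt0 lt_mod !orbT; split=> //; apply/and3P.
have /in_powersE[_ dvd_y] := (xy _ _).1 pxq.
rewrite !cat_ufactor size_ufactor add0n => /and3P[_ -> _] /=.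
move: dvd_y; rewrite !size_cat size_ufactor.
by rewrite -(eqn_modDr (size q)) -!addnA /dvdn => /eqP ->; move/eqP: dvd_x ->.
Qed.

Lemma rho_word_map x y : rho u x y -> word_map u x =1 word_map u y.
Proof.
move=> xy w; case: (boolP (in_necklace u w)) => [/in_necklaceP[i ->]|w_notin].
  have yx : rho u y x by move=> p q; apply: iff_sym.
  rewrite !word_map_ufactor; case: ifP => [x_at|x_not_at].
    by case/andP: (rho_ufactor i xy x_at) => -> /eqP/(eq_ufactor _ _ n) ->.
  case: ifP => // y_at.
  by case/andP: (rho_ufactor i yx y_at); rewrite x_not_at.
by rewrite !word_map_notin.
Qed.

Hypothesis u_primitive : primitive u.

Lemma period_dvdn p : period p -> n %| p.
Proof.
move=> hp; have g_period : period (gcdn p n) by apply: period_gcdn hp period_size.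
have g_dvd : gcdn p n %| n := dvdn_gcdr p n.
have g_gt0 : 0 < gcdn p n by rewrite gcdn_gt0 u_nonempty orbT.
suff <- : gcdn p n = n by exact: dvdn_gcdl.
apply/eqP; rewrite eqn_leq dvdn_leq //= leqNgt; apply/negP => g_lt.
apply: (u_primitive (ufactor 0 (gcdn p n)) (n %/ gcdn p n)).
  by rewrite ltn_divRL // mul1n.
by rewrite wpow_ufactor // divnK // ufactor0.
Qed.

Lemma ufactor_inj i j : (ufactor i n == ufactor j n) = (i == j %[mod n]).
Proof.
apply/eqP/eqP => [|/(eq_ufactor _ _ n) //].
wlog le_ij : i j / i <= j.
  by move=> H; case/orP: (leq_total i j) => [/H//|/H sym_ij /esym /sym_ij].
rewrite -(subnKC le_ij) => /ufactor_eq_period/period_dvdn/dvdnP[m ->].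
by rewrite addnC modnMDl.
Qed.

Lemma word_map_in_powers x y p q : y != [::] -> word_map u x =1 word_map u y ->
  in_powers u (p ++ x ++ q) -> in_powers u (p ++ y ++ q).
Proof.
move=> y_nonempty xy /in_powersE[_ dvd_x].
rewrite !cat_ufactor add0n => /and3P[p_at x_at q_at].
move: (xy (ufactor (size p) n)); rewrite !word_map_ufactor x_at.
case: ifP => // y_at [/eqP]; rewrite ufactor_inj => /eqP eq_xy.
apply/in_powersE; rewrite !cat_ufactor add0n p_at y_at -(eq_ufactor _ _ _ eq_xy) q_at.
have y_gt0 : 0 < size y by rewrite lt0n size_eq0.
rewrite !size_cat !addn_gt0 y_gt0 orbT; split=> //.
by move: dvd_x; rewrite !size_cat /dvdn !addnA -modnDml eq_xy modnDml.
Qed.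

Lemma rho_iff_word_map x y : x != [::] -> y != [::] ->
  rho u x y <-> word_map u x =1 word_map u y.
Proof.
move=> x_nonempty y_nonempty; split; first exact: rho_word_map.
by move=> xy p q; split; apply: word_map_in_powers => // w; rewrite xy.
Qed.

End PeriodicExtension.

Theorem theorem2p5 (d : Order.disp_t) (A : finOrderType d) (u : seq A) :
  u != [::] -> primitive u ->
  [/\ (forall x : seq A, x != [::] -> inS u (word_map u x)),
      (forall x y : seq A, x != [::] -> y != [::] ->
         (rho u x y <-> forall w, word_map u x w = word_map u y w)),
      (forall x y : seq A, x != [::] -> y != [::] ->
         forall w, word_map u (x ++ y) w = pmcomp (word_map u x) (word_map u y) w)
    & (forall f, inS u f -> exists2 x : seq A, x != [::] &
         forall w, f w = word_map u x w)].
Proof.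
move=> u_nonempty u_primitive.
have x0 : A by move: u_nonempty; case: (u) => // a.
have u_gt0 : 0 < size u by rewrite lt0n size_eq0.
split.
- exact: inS_word_map.
- move=> x y; exact: (rho_iff_word_map x0 u_gt0 u_primitive x y).
- by move=> x y _ _ w; exact: (word_map_cat x0 u_gt0 x y w).
- exact: (inS_eq_word_map x0 u_gt0).
Qed.
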